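(* Let $m\ge 1$, and let $a_1,\dots,a_m\in[-1,1]$ with $\sum_{i=1}^m a_i=0$; set $p_i=(1+a_i)/m$. Let $X_1,\dots,X_n$ be i.i.d. on $[m]$ with $\Pr(X_1=i)=p_i$, let $h(x,y)=\mathbb{1}(x=y)$, $U_n=\binom{n}{2}^{-1}\sum_{1\le i<j\le n}h(X_i,X_j)$, and $\hat h(i)=\frac{1}{n-1}\sum_{j\ne i}h(X_i,X_j)$ for $i\in[n]$. Let $\gamma\in(0,1)$, assume $n\ge 16/\gamma$, and set $\xi=\frac{6}{m}+\frac{8\log(4n/\gamma)}{n}$. Then with probability at least $1-\gamma$, $|\hat h(i)-U_n|\le\xi$ for all $i\in[n]$. *)

From HB Require Import structures.
From mathcomp Require Import all_boot all_order all_algebra.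
From mathcomp Require Import all_classical all_reals all_analysis.
Set Implicit Arguments. Unset Strict Implicit. Unset Printing Implicit Defensive.
Import Order.TTheory GRing.Theory Num.Theory.
Local Open Scope ring_scope.

Section Defs.
Context {R : realType} {m n : nat}.

Definition hker (x y : 'I_m) : R := (x == y)%:R.

Definition iid_mass (p : 'I_m -> R) (x : {ffun 'I_n -> 'I_m}) : R :=
  \prod_(i < n) p (x i).

Definition iid_prob (p : 'I_m -> R) (E : pred {ffun 'I_n -> 'I_m}) : R :=
  \sum_(x | E x) iid_mass p x.

Definition Ustat (x : {ffun 'I_n -> 'I_m}) : R :=
  ('C(n, 2))%:R^-1 * \sum_(i < n) \sum_(j < n | (i < j)%N) hker (x i) (x j).

Definition hhat (x : {ffun 'I_n -> 'I_m}) (i : 'I_n) : R :=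
  ((n - 1)%:R)^-1 * \sum_(j < n | j != i) hker (x i) (x j).

End Defs.

From HB Require Import structures.
From mathcomp Require Import all_boot all_order all_algebra.
From mathcomp Require Import all_classical all_reals all_analysis.
From mathcomp Require Import zify ring lra.
Import Order.TTheory GRing.Theory Num.Theory.
Local Open Scope ring_scope.

(* Since U_n is the average of the hhat(i), both hhat(i) and U_n lie in
   [0, xi] as soon as every row sum hrow(i) = sum_{j <> i} 1(X_i = X_j) is at
   most (n - 1) xi.  Given X_i = k, hrow(i) is a sum of n - 1 independent
   Bernoulli(p_k) variables with p_k <= 2/m, so its exponential moment is at
   most (1 + p_k (e - 1))^(n-1) <= exp (6 (n - 1) / m).  Markov's inequality
   for exp (hrow i) and a union bound over i bound the failure probability by
   n exp (6 (n - 1) / m - (n - 1) xi) <= n exp (- log (4 n / gamma)) = gamma / 4. *)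

Section KernelStatistics.
Context {R : realType} {m n : nat}.
Implicit Types (x : {ffun 'I_n -> 'I_m}) (xi : R).

Definition hrow x (i : 'I_n) : R := \sum_(j < n | j != i) hker (x i) (x j).

Lemma hker_ge0 (k l : 'I_m) : 0 <= hker k l :> R.
Proof. by rewrite /hker ler0n. Qed.

Lemma sum_hrow x :
  \sum_(i < n) hrow x i = 2 * \sum_(i < n) \sum_(j < n | (i < j)%N) hker (x i) (x j).
Proof.
have split_row i : hrow x i =
    \sum_(j < n | (i < j)%N) hker (x i) (x j)
  + \sum_(j < n | (j < i)%N) hker (x i) (x j) :> R.
  rewrite /hrow (bigID (fun j : 'I_n => (i < j)%N)) /=; congr (_ + _).
    by apply: eq_bigl => j; rewrite -val_eqE /= neq_ltn; lia.
  by apply: eq_bigl => j; rewrite -val_eqE /= neq_ltn; lia.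
have lower_eq_upper : \sum_(i < n) \sum_(j < n | (j < i)%N) hker (x i) (x j) =
    \sum_(i < n) \sum_(j < n | (i < j)%N) hker (x i) (x j) :> R.
  rewrite (exchange_big_dep xpredT) //=.
  by apply: eq_bigr => j _; apply: eq_bigr => i _; rewrite /hker eq_sym.
by rewrite (eq_bigr _ (fun i _ => split_row i)) big_split /= lower_eq_upper mulr_natl mulr2n.
Qed.

Lemma hhat_ge0 x i : 0 <= hhat x i :> R.
Proof.
by rewrite /hhat mulr_ge0 ?invr_ge0 ?ler0n ?sumr_ge0 // => j _; exact: hker_ge0.
Qed.

Hypothesis n_ge2 : (2 <= n)%N.

Lemma hhat_le x i xi : (hhat x i <= xi) = (hrow x i <= (n - 1)%:R * xi).
Proof. by rewrite /hhat ler_pdivrMl // ltr0n subn_gt0. Qed.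

Lemma Ustat_mean_hhat x : Ustat x = n%:R^-1 * \sum_(i < n) hhat x i :> R.
Proof.
have binE : ('C(n, 2))%:R = n%:R * (n - 1)%:R / 2 :> R.
  have binN : ('C(n, 2) * 2 = n * (n - 1))%N.
    by rewrite mulnC -mul_bin_diag bin1 subn1.
  by rewrite -natrM -binN natrM mulfK ?pnatr_eq0.
have n_neq0 : n%:R != 0 :> R by rewrite pnatr_eq0; lia.
have n1_neq0 : (n - 1)%:R != 0 :> R by rewrite pnatr_eq0; lia.
rewrite /Ustat /hhat -mulr_sumr sum_hrow binE.
by field; rewrite n_neq0 n1_neq0.
Qed.

Lemma dist_hhat_Ustat_le x xi :
  (forall i, hhat x i <= xi) -> forall i, `|hhat x i - Ustat x| <= xi.
Proof.
move=> hhat_le_xi i.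
have n_gt0 : 0 < n%:R :> R by rewrite ltr0n; lia.
have U_ge0 : 0 <= Ustat x :> R.
  by rewrite Ustat_mean_hhat mulr_ge0 ?invr_ge0 ?ler0n ?sumr_ge0 // => j _; exact: hhat_ge0.
have U_le : Ustat x <= xi :> R.
  rewrite Ustat_mean_hhat ler_pdivrMl //.
  by rewrite mulr_natl -[n in xi *+ n]card_ord -sumr_const ler_sum.
have := hhat_ge0 x i; have := hhat_le_xi i.
by rewrite ler_distl; lra.
Qed.

End KernelStatistics.

Lemma expR1_le4 (R : realType) : expR 1 <= 4 :> R.
Proof.
have sqrt_e_le2 : expR (1 / 2) <= 2 :> R.
  have : 1 / 2 <= (expR (1 / 2))^-1 :> R.
    by rewrite -expRN; apply: le_trans (expR_ge1Dx _); lra.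
  have t_gt0 := expR_gt0 (1 / 2 : R).
  have := mulfV (lt0r_neq0 t_gt0); nra.
have -> : expR 1 = expR (1 / 2) * expR (1 / 2) :> R by rewrite -expRD; congr expR; lra.
by have := expR_gt0 (1 / 2 : R); nra.
Qed.

Lemma sum_exists_gt_le_expR {R : realType} {T I : finType} (w : T -> R)
    (f : T -> I -> R) (b : R) :
  (forall t, 0 <= w t) ->
  \sum_(t | [exists i, b < f t i]) w t <=
    expR (- b) * \sum_(i : I) \sum_(t : T) w t * expR (f t i).
Proof.
move=> w_ge0.
have one_le t : [exists i, b < f t i] -> 1 <= \sum_(i : I) expR (f t i - b).
  case/existsP=> i lt_b; rewrite (bigD1 i) //=.
  apply: le_trans (_ : expR (f t i - b) <= _).
    by apply: le_trans (expR_ge1Dx _); lra.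
  by rewrite lerDl sumr_ge0 // => j _; exact: expR_ge0.
have -> : expR (- b) * \sum_(i : I) \sum_(t : T) w t * expR (f t i) =
    \sum_t w t * \sum_(i : I) expR (f t i - b).
  rewrite mulr_sumr; under eq_bigr do rewrite mulr_sumr.
  rewrite exchange_big; apply: eq_bigr => t _; rewrite mulr_sumr.
  by apply: eq_bigr => i _; rewrite expRD; ring.
rewrite [leRHS](bigID (fun t => [exists i, b < f t i])) /=.
apply: le_trans (_ : \sum_(t | [exists i, b < f t i]) w t * \sum_(i : I) expR (f t i - b) <= _).
  by apply: ler_sum => t /one_le; rewrite -{1}(mulr1 (w t)); apply: ler_wpM2l.
by rewrite lerDl sumr_ge0 // => t _; rewrite mulr_ge0 ?sumr_ge0 // => i _; exact: expR_ge0.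
Qed.

Section IidSamples.
Context {R : realType} {m n : nat} {p : 'I_m -> R}.
Implicit Types (x : {ffun 'I_n -> 'I_m}) (E F : pred {ffun 'I_n -> 'I_m}).

(* Splitting on the value k of X_i, the other n - 1 coordinates are independent. *)
Lemma sum_iid_mass_prod_offdiag (g : 'I_m -> 'I_m -> R) (i : 'I_n) :
  \sum_x iid_mass p x * \prod_(j < n | j != i) g (x i) (x j) =
  \sum_(k < m) p k * (\sum_(l < m) p l * g k l) ^+ (n - 1).
Proof.
pose G (k : 'I_m) (j : 'I_n) (l : 'I_m) : R :=
  if j == i then (l == k)%:R * p l else p l * g k l.
have split_value x : iid_mass p x * \prod_(j < n | j != i) g (x i) (x j) =
    \sum_(k < m) \prod_(j < n) G k j (x j).
  rewrite [RHS](bigD1 (x i)) //= [X in _ = _ + X]big1 ?addr0 => [|k /negbTE neq_k]; last first.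
    by rewrite (bigD1 i) //= /G eqxx eq_sym neq_k !mul0r.
  rewrite [RHS](bigD1 i) //= /G !eqxx mul1r /iid_mass (bigD1 i) //= -mulrA -big_split.
  by congr (_ * _); apply: eq_bigr => j /negbTE ->.
rewrite (eq_bigr _ (fun x _ => split_value x)) exchange_big /=.
apply: eq_bigr => k _; rewrite -(bigA_distr_bigA (G k)) (bigD1 i) //=; congr (_ * _).
  rewrite /G eqxx (bigD1 k) //= eqxx mul1r big1 ?addr0 // => l /negbTE ->.
  by rewrite mul0r.
rewrite (eq_bigr (fun _ => \sum_(l < m) p l * g k l)) => [|j /negbTE neq_j]; last first.
  by rewrite /G neq_j.
by rewrite prodr_const cardC1 card_ord subn1.
Qed.

Hypotheses (p_ge0 : forall k, 0 <= p k) (p_sum1 : \sum_(k < m) p k = 1).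

Lemma iid_mass_ge0 x : 0 <= iid_mass p x.
Proof. exact: prodr_ge0. Qed.

Lemma sum_iid_mass : \sum_(x : {ffun 'I_n -> 'I_m}) iid_mass p x = 1.
Proof.
by rewrite /iid_mass -(bigA_distr_bigA (fun _ l => p l)) /= p_sum1 prodr_const expr1n.
Qed.

Lemma iid_prob_ge_subr E F :
  (forall x, ~~ E x -> F x) -> 1 - iid_prob p F <= iid_prob p E.
Proof.
move=> notE_F; rewrite -sum_iid_mass (bigID E) /= /iid_prob lerBlDl [leRHS]addrC lerD2l.
rewrite [leLHS]big_mkcond [leRHS]big_mkcond ler_sum // => x _.
have := iid_mass_ge0 x; case: (boolP (E x)) => [_|/notE_F -> //].
by case: (F x).
Qed.

Hypothesis p_le : forall k, p k <= 2 / m%:R.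

Lemma sum_mass_expR_hker_le (k : 'I_m) :
  \sum_(l < m) p l * expR (hker k l) <= expR (6 / m%:R).
Proof.
have -> : \sum_(l < m) p l * expR (hker k l) = 1 + p k * (expR 1 - 1).
  rewrite (bigD1 k) //= /hker eqxx (eq_bigr p) => [|l /negbTE neq_l]; last first.
    by rewrite eq_sym neq_l expR0 mulr1.
  have -> : \sum_(l < m | l != k) p l = 1 - p k.
    by rewrite -p_sum1 [in RHS](bigD1 k) //= addrC addrK.
  by rewrite mulr1n; ring.
apply: le_trans (expR_ge1Dx _) _; rewrite ler_expR.
have := expR1_le4 R; have := expR_ge1Dx (1 : R); have := p_ge0 k; have := p_le k.
have -> : 6 / m%:R = 3 * (2 / m%:R) :> R by ring.
nra.
Qed.

Lemma iid_hrow_mgf_le (i : 'I_n) :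
  \sum_x iid_mass p x * expR (hrow x i) <= expR ((n - 1)%:R * (6 / m%:R)).
Proof.
under eq_bigr do rewrite expR_sum.
rewrite (sum_iid_mass_prod_offdiag (fun k l => expR (hker k l))) expRM_natl.
apply: le_trans (_ : \sum_(k < m) p k * expR (6 / m%:R) ^+ (n - 1) <= _).
  apply: ler_sum => k _; apply: ler_wpM2l => //.
  apply: lerXn2r; rewrite ?nnegrE ?expR_ge0 ?sum_mass_expR_hker_le //.
  by rewrite sumr_ge0 // => l _; rewrite mulr_ge0 ?expR_ge0.
by rewrite -mulr_suml p_sum1 mul1r.
Qed.

Lemma iid_prob_hrow_gt_le (b : R) :
  iid_prob p (fun x => [exists i, b < hrow x i]) <=
    n%:R * expR (- b + (n - 1)%:R * (6 / m%:R)).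
Proof.
apply: le_trans (sum_exists_gt_le_expR _ _ _ iid_mass_ge0) _.
rewrite expRD mulrCA ler_wpM2l ?expR_ge0 // [n%:R * _]mulr_natl.
rewrite -[n in _ *+ n]card_ord -sumr_const.
by apply: ler_sum => i _; exact: iid_hrow_mgf_le.
Qed.

End IidSamples.

Section PerturbedUniform.
Context {R : realType} {m : nat} {a : 'I_m -> R}.
Hypothesis a_bound : forall k, -1 <= a k <= 1.

Lemma perturbed_mass_ge0 k : 0 <= (1 + a k) / m%:R.
Proof. by rewrite divr_ge0 ?ler0n //; case/andP: (a_bound k); lra. Qed.

Lemma perturbed_mass_le k : (1 + a k) / m%:R <= 2 / m%:R.
Proof. by rewrite ler_wpM2r ?invr_ge0 ?ler0n //; case/andP: (a_bound k); lra. Qed.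

Lemma sum_perturbed_mass :
  (1 <= m)%N -> \sum_(k < m) a k = 0 -> \sum_(k < m) (1 + a k) / m%:R = 1.
Proof.
move=> m_ge1 a_sum; rewrite -mulr_suml big_split /= a_sum addr0 sumr_const card_ord.
by rewrite -mulr_natl mulr1 mulfV // pnatr_eq0 -lt0n.
Qed.

End PerturbedUniform.

Lemma le_subn1_mul_div {R : realType} {n : nat} {L : R} :
  (2 <= n)%N -> 0 <= L -> L <= (n - 1)%:R * (8 * L / n%:R).
Proof.
move=> n_ge2 L_ge0; rewrite natrB ?(ltnW n_ge2) // mulrA mulrBl mul1r.
have n_ge2R : 2 <= n%:R :> R by rewrite (ler_nat R 2).
rewrite ler_pdivlMr; last by lra.
nra.
Qed.

Theorem lemmaA19 (R : realType) (m n : nat) (a : 'I_m -> R) (gamma : R) :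
  (1 <= m)%N ->
  (forall i, -1 <= a i <= 1) ->
  \sum_(i < m) a i = 0 ->
  0 < gamma < 1 ->
  16 / gamma <= n%:R ->
  let p := fun i : 'I_m => (1 + a i) / m%:R in
  let xi := 6 / m%:R + 8 * ln (4 * n%:R / gamma) / n%:R in
  1 - gamma <=
    iid_prob p (fun x : {ffun 'I_n -> 'I_m} =>
                  [forall i : 'I_n, `|hhat x i - Ustat x| <= xi]).
Proof.
move=> m_ge1 a_bound a_sum /andP[gamma_gt0 gamma_lt1] n_large /=.
set p := fun i => (1 + a i) / m%:R.
set xi := _ + _ / n%:R.
have p_ge0 : forall k, 0 <= p k := perturbed_mass_ge0 a_bound.
have p_le : forall k, p k <= 2 / m%:R := perturbed_mass_le a_bound.
have p_sum1 : \sum_(k < m) p k = 1 := sum_perturbed_mass m_ge1 a_sum.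
have n_gt16 : 16 < n%:R :> R.
  by apply: lt_le_trans n_large; rewrite ltr_pdivlMr //; lra.
have n_ge2 : (2 <= n)%N by rewrite -(ler_nat R); lra.
pose L := ln (4 * n%:R / gamma).
have L_ge0 : 0 <= L by rewrite ln_ge0 // ler_pdivlMr //; lra.
have expR_NL : expR (- L) = gamma / (4 * n%:R).
  by rewrite expRN lnK ?invf_div // posrE divr_gt0 //; lra.
pose b := (n - 1)%:R * xi.
apply: le_trans _ (iid_prob_ge_subr p_ge0 p_sum1 _
  (fun x => [exists i, b < hrow x i]) _); first last.
  move=> x; apply: contraR => /existsPn hrow_le; apply/forallP.
  by apply: dist_hhat_Ustat_le => // i; rewrite hhat_le // leNgt hrow_le.
rewrite lerD2l lerN2; apply: le_trans (iid_prob_hrow_gt_le p_ge0 p_sum1 p_le b) _.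
have exponent_le : - b + (n - 1)%:R * (6 / m%:R) <= - L.
  by have := le_subn1_mul_div n_ge2 L_ge0; rewrite /b /xi /L mulrDr; lra.
apply: le_trans (_ : n%:R * expR (- L) <= _); first by rewrite ler_wpM2l ?ler0n // ler_expR.
have -> : n%:R * expR (- L) = gamma / 4.
  by rewrite expR_NL; field; rewrite gt_eqF //; lra.
lra.
Qed.
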